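(* Let $H=1$ and assume the MDP satisfies the low-rank assumption with parameter $d$ (i.e. $r_1$ has rank at most $\lfloor d/2\rfloor$). In the infinite-sample setting (the values $r_1(s,a)$ are known for $(s,a)\in\operatorname{supp}(d^{\pi^\beta})$), let $\widehat Q$ be a minimizer of $\|M\|_{\max}$ over $M\in\mathbb R^{S\times A}$ subject to $\mathbb 1_{d^{\pi^\beta}}\circ M=\mathbb 1_{d^{\pi^\beta}}\circ r_1$ and $\|M\|_\infty\le1$, and let $\widehat J=\sum_{s,a}\mu_1(s)\pi^\theta_1(a\mid s)\widehat Q(s,a)$. Then \[ \big|\widehat J - J^{\pi^\theta}\big|\le2\sqrt{dSA}\,\operatorname{Dis}\big(d^{\pi^\beta},d^{\pi^\theta}\big). \]
   Context: Contextual bandit: finite state (context) set $\mathcal S$, $S=|\mathcal S|$, finite action set $\mathcal A$, $A=|\mathcal A|$, reward $r_1:\mathcal S\times\mathcal A\to[0,1]$, context distribution $\mu_1$. For a policy $\pi_1:\mathcal S\to\Delta(\mathcal A)$, $d^\pi(s,a)=\mu_1(s)\pi_1(a\mid s)$ and $J^\pi=\sum_{s,a}d^\pi(s,a)r_1(s,a)$; $\pi^\theta$ is the target and $\pi^\beta$ the behavior policy. Functions on $\mathcal S\times\mathcal A$ are viewed as $S\times A$ matrices. $\|M\|_{\max}=\min_{U,V:\,M=UV^\top}\|U\|_{2\to\infty}\|V\|_{2\to\infty}$ ($\|\cdot\|_{2\to\infty}$ maximum row Euclidean norm), $\|M\|_\infty=\max|M_{ij}|$, $\mathbb 1_M$ support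 indicator, $\circ$ entrywise product, $\|\cdot\|_{\mathrm{op}}$ spectral norm. Operator discrepancy: $\operatorname{Dis}(p,q)=\min\{\|g-q\|_{\mathrm{op}}:g\in\Delta(\mathcal S\times\mathcal A),\ \operatorname{supp}(g)\subseteq\operatorname{supp}(p)\}$. *)

From HB Require Import structures.
From mathcomp Require Import all_boot all_order all_algebra.
From mathcomp Require Import boolp classical_sets reals.
Set Implicit Arguments. Unset Strict Implicit. Unset Printing Implicit Defensive.
Import Order.TTheory GRing.Theory Num.Theory.
Local Open Scope ring_scope.
Local Open Scope classical_set_scope.

Section Defs.
Variable R : realType.

Definition row_norm2 m k (U : 'M[R]_(m, k)) (i : 'I_m) : R :=
  Num.sqrt (\sum_(j < k) U i j ^+ 2).

Definition norm_2inf m k (U : 'M[R]_(m, k)) : R :=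
  \big[Num.max/0]_(i < m) row_norm2 U i.

Definition maxnorm m n (M : 'M[R]_(m, n)) : R :=
  inf [set x : R | exists (k : nat) (U : 'M[R]_(m, k)) (V : 'M[R]_(n, k)),
        M = U *m V^T /\ x = norm_2inf U * norm_2inf V].

Definition supnorm m n (M : 'M[R]_(m, n)) : R :=
  \big[Num.max/0]_(i < m) \big[Num.max/0]_(j < n) `|M i j|.

Definition opnorm m n (M : 'M[R]_(m, n)) : R :=
  sup [set x : R | exists (u : 'I_m -> R) (v : 'I_n -> R),
        \sum_i u i ^+ 2 <= 1 /\ \sum_j v j ^+ 2 <= 1 /\
        x = \sum_i \sum_j u i * M i j * v j].

Definition is_distr m n (g : 'M[R]_(m, n)) : Prop :=
  (forall i j, 0 <= g i j) /\ \sum_i \sum_j g i j = 1.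

Definition Dis m n (p q : 'M[R]_(m, n)) : R :=
  inf [set x : R | exists g : 'M[R]_(m, n),
        is_distr g /\ (forall i j, p i j = 0 -> g i j = 0) /\
        x = opnorm (g - q)].

Definition occ m n (mu : 'I_m -> R) (pi : 'I_m -> 'I_n -> R) : 'M[R]_(m, n) :=
  \matrix_(s, a) (mu s * pi s a).

Definition supp_ind m n (M : 'M[R]_(m, n)) : 'M[R]_(m, n) :=
  \matrix_(i, j) (if M i j != 0 then 1 else 0).

Definition hadamard m n (M N : 'M[R]_(m, n)) : 'M[R]_(m, n) :=
  \matrix_(i, j) (M i j * N i j).

Definition value m n (mu : 'I_m -> R) (pi : 'I_m -> 'I_n -> R)
  (Q : 'M[R]_(m, n)) : R :=
  \sum_s \sum_a mu s * pi s a * Q s a.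

End Defs.

(* Let q = d^{pi^theta} and let g be any distribution supported on supp d^{pi^beta}.
   Qhat and r agree on that support, so Jhat - J = <g - q, r - Qhat>; it suffices
   to bound this by 2 sqrt(dSA) ||g - q||_op and take the infimum over g.  Writing a
   matrix as U V^T, the pairing <X, U V^T> is a sum over the columns of U and V of
   bilinear forms u^T X v, hence is at most ||X||_op sqrt(S) ||U||_{2->oo}
   sqrt(A) ||V||_{2->oo} by Cauchy-Schwarz; so |<X, M>| <= sqrt(SA) ||X||_op ||M||_max.
   By optimality ||Qhat||_max <= ||r||_max, and a rank-k matrix X Y^T with entries
   in [-1, 1] has max norm at most sqrt(2k): there is an invertible H for which
   the rows of Y H lie in the unit ball and those of X H^-T have squared norm at
   most 2k.  Otherwise some row w of X H^-T has |w|^2 > 2k, and the rank-one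
   correction H (p I + q w^T w) multiplies |det H| by at least 21/20 while keeping
   the rows of Y H in the unit ball (their inner products with w are entries of
   X Y^T); iterating contradicts the bound |det H| <= k! / |det Y0| for an
   invertible k x k block Y0 of Y. *)

From mathcomp Require Import all_boot all_order all_algebra perm.
From mathcomp Require Import boolp classical_sets reals.
From mathcomp Require Import ring lra zify.
Set Implicit Arguments. Unset Strict Implicit. Unset Printing Implicit Defensive.
Import Order.TTheory GRing.Theory Num.Theory.
Local Open Scope ring_scope.
Local Open Scope classical_set_scope.

Section SumOfSquares.
Variable R : rcfType.

Lemma sumr_sqr_ge0 n (u : 'I_n -> R) : 0 <= \sum_j u j ^+ 2.
Proof. by apply: sumr_ge0 => j _; exact: sqr_ge0. Qed.

Lemma sqr_le_sumr_sqr n (u : 'I_n -> R) i : u i ^+ 2 <= \sum_j u j ^+ 2.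
Proof. by rewrite (bigD1 i) //= lerDl; apply: sumr_ge0 => j _; exact: sqr_ge0. Qed.

Lemma normr_le1_sumr_sqr n (u : 'I_n -> R) i :
  \sum_j u j ^+ 2 <= 1 -> `|u i| <= 1.
Proof.
move=> le1; rewrite -(expr_le1 (n := 2)) // real_normK ?num_real //.
exact: le_trans (sqr_le_sumr_sqr u i) le1.
Qed.

Lemma sqrt_sumr_sqr_eq0 n (u : 'I_n -> R) :
  Num.sqrt (\sum_j u j ^+ 2) = 0 -> forall j, u j = 0.
Proof.
move/eqP; rewrite sqrtr_eq0 => le0 j; apply/eqP; rewrite -sqrf_eq0 eq_le sqr_ge0 andbT.
exact: le_trans (sqr_le_sumr_sqr u j) le0.
Qed.

Lemma sumr_sqr_scale n (c : R) (u : 'I_n -> R) :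
  \sum_j (c * u j) ^+ 2 = c ^+ 2 * \sum_j u j ^+ 2.
Proof. by rewrite mulr_sumr; apply: eq_bigr => j _; rewrite exprMn. Qed.

Lemma CauchySchwarz_sumr n (a b : 'I_n -> R) :
  \sum_l a l * b l <= Num.sqrt (\sum_l a l ^+ 2) * Num.sqrt (\sum_l b l ^+ 2).
Proof.
have sq_le : (\sum_l a l * b l) ^+ 2 <= (\sum_l a l ^+ 2) * (\sum_l b l ^+ 2).
  pose sq2 (f g : 'I_n -> R) := \sum_l \sum_m f l ^+ 2 * g m ^+ 2.
  have sumsE : (\sum_l a l ^+ 2) * (\sum_l b l ^+ 2) = sq2 a b.
    by rewrite mulr_suml; apply: eq_bigr => l _; rewrite mulr_sumr.
  have dotE : (\sum_l a l * b l) ^+ 2 = \sum_l \sum_m (a l * b l) * (a m * b m).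
    by rewrite expr2 mulr_suml; apply: eq_bigr => l _; rewrite mulr_sumr.
  have lagrange : 2 * ((\sum_l a l ^+ 2) * (\sum_l b l ^+ 2) - (\sum_l a l * b l) ^+ 2)
      = \sum_l \sum_m (a l * b m - a m * b l) ^+ 2.
    have -> : \sum_l \sum_m (a l * b m - a m * b l) ^+ 2 =
        sq2 a b + sq2 b a - 2 * \sum_l \sum_m (a l * b l) * (a m * b m).
      rewrite /sq2 mulr_sumr -big_split -sumrB; apply: eq_bigr => l _.
      rewrite mulr_sumr -big_split -sumrB; apply: eq_bigr => m _ /=; ring.
    have -> : sq2 b a = sq2 a b.
      by rewrite /sq2 exchange_big; apply: eq_bigr => l _; apply: eq_bigr => m _; rewrite mulrC.
    by rewrite -sumsE -dotE; ring.
  have : 0 <= \sum_l \sum_m (a l * b m - a m * b l) ^+ 2.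
    by apply: sumr_ge0 => l _; exact: sumr_sqr_ge0.
  rewrite -lagrange; lra.
rewrite -sqrtrM ?sumr_sqr_ge0 //; apply: le_trans (ler_norm _) _.
by rewrite -sqrtr_sqr ler_sqrt // mulr_ge0 // sumr_sqr_ge0.
Qed.

Lemma sumr_sqr_rank1_update n (z w : 'I_n -> R) (p q : R) :
  let c := \sum_l z l * w l in
  \sum_l (p * z l + q * c * w l) ^+ 2 =
    p ^+ 2 * \sum_l z l ^+ 2 + 2 * p * q * c ^+ 2 + q ^+ 2 * c ^+ 2 * \sum_l w l ^+ 2.
Proof.
move=> c; rewrite (eq_bigr (fun l => p ^+ 2 * z l ^+ 2 + (2 * p * q * c) * (z l * w l)
  + (q ^+ 2 * c ^+ 2) * w l ^+ 2)) => [|l _]; last by ring.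
by rewrite !big_split /= -!mulr_sumr -/c; ring.
Qed.

End SumOfSquares.

Section OperatorNorm.
Variable R : realType.
Variables m n : nat.
Implicit Types (M : 'M[R]_(m, n)) (u : 'I_m -> R) (v : 'I_n -> R).

Definition bilin M u v := \sum_i \sum_j u i * M i j * v j.

Lemma bilinZl M c u v : bilin M (fun i => c * u i) v = c * bilin M u v.
Proof.
rewrite /bilin mulr_sumr; apply: eq_bigr => i _; rewrite mulr_sumr.
by apply: eq_bigr => j _; rewrite !mulrA.
Qed.

Lemma bilinZr M c u v : bilin M u (fun j => c * v j) = c * bilin M u v.
Proof.
rewrite /bilin mulr_sumr; apply: eq_bigr => i _; rewrite mulr_sumr.
by apply: eq_bigr => j _; rewrite mulrCA !mulrA.
Qed.

Lemma bilinNl M u v : bilin M (fun i => - u i) v = - bilin M u v.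
Proof.
rewrite /bilin -sumrN; apply: eq_bigr => i _; rewrite -sumrN.
by apply: eq_bigr => j _; rewrite !mulNr.
Qed.

Lemma opnorm_has_sup M :
  has_sup [set x : R | exists u v,
    \sum_i u i ^+ 2 <= 1 /\ \sum_j v j ^+ 2 <= 1 /\ x = bilin M u v].
Proof.
split.
  exists 0, (fun _ => 0), (fun _ => 0).
  by rewrite /bilin !big1 // => *; rewrite ?big1 // => *; rewrite ?expr0n ?mul0r.
exists (\sum_i \sum_j `|M i j|) => _ [u [v [u1 [v1 ->]]]].
apply: le_trans (ler_norm _) _; apply: le_trans (ler_norm_sum _ _ _) _.
apply: ler_sum => i _; apply: le_trans (ler_norm_sum _ _ _) _; apply: ler_sum => j _.
rewrite !normrM mulrAC -[leRHS]mul1r ler_wpM2r // mulr_ile1 //.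
  exact: normr_le1_sumr_sqr u1.
exact: normr_le1_sumr_sqr v1.
Qed.

Lemma bilin_le_opnorm M u v :
  \sum_i u i ^+ 2 <= 1 -> \sum_j v j ^+ 2 <= 1 -> bilin M u v <= opnorm M.
Proof. by move=> u1 v1; apply: (sup_upper_bound (opnorm_has_sup M)); exists u, v. Qed.

Lemma opnorm_ge0 M : 0 <= opnorm M.
Proof.
apply: le_trans (bilin_le_opnorm M (u := fun _ => 0) (v := fun _ => 0) _ _).
- by rewrite /bilin big1 // => i _; rewrite big1 // => j _; rewrite !mul0r.
- by rewrite big1 // => i _; rewrite expr0n.
- by rewrite big1 // => i _; rewrite expr0n.
Qed.

Lemma normr_bilin_le M u v :
  `|bilin M u v| <= opnorm M * Num.sqrt (\sum_i u i ^+ 2) * Num.sqrt (\sum_j v j ^+ 2).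
Proof.
set a := Num.sqrt _; set b := Num.sqrt _.
have [a0|a_neq0] := eqVneq a 0.
  rewrite a0 mulr0 mul0r /bilin big1 ?normr0 // => i _.
  by rewrite big1 // => j _; rewrite (sqrt_sumr_sqr_eq0 a0) !mul0r.
have [b0|b_neq0] := eqVneq b 0.
  rewrite b0 mulr0 /bilin big1 ?normr0 // => i _.
  by rewrite big1 // => j _; rewrite (sqrt_sumr_sqr_eq0 b0) mulr0.
have a_gt0 : 0 < a by rewrite lt_def a_neq0 sqrtr_ge0.
have b_gt0 : 0 < b by rewrite lt_def b_neq0 sqrtr_ge0.
pose u' i := a^-1 * u i; pose v' j := b^-1 * v j.
have unit_sqr k c (w : 'I_k -> R) : 0 < c -> c = Num.sqrt (\sum_i w i ^+ 2) ->
    \sum_i (c^-1 * w i) ^+ 2 <= 1 :> R.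
  move=> c_gt0 cE; rewrite sumr_sqr_scale -(sqr_sqrtr (sumr_sqr_ge0 w)) -cE.
  by rewrite exprVn mulVf // expf_neq0 // gt_eqF.
have u'1 : \sum_i u' i ^+ 2 <= 1 by exact: unit_sqr.
have v'1 : \sum_j v' j ^+ 2 <= 1 by exact: unit_sqr.
have Nu'1 : \sum_i (- u' i) ^+ 2 <= 1 by under eq_bigr do rewrite sqrrN.
have scaled : bilin M u v = a * b * bilin M u' v'.
  by rewrite bilinZl bilinZr; field; rewrite a_neq0 b_neq0.
have -> : opnorm M * a * b = a * b * opnorm M by ring.
rewrite scaled normrM gtr0_norm ?mulr_gt0 // ler_pM2l ?mulr_gt0 //.
rewrite ler_norml bilin_le_opnorm // andbT lerNl.
by rewrite -bilinNl bilin_le_opnorm.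
Qed.

End OperatorNorm.

Lemma ler_mul_inf (R : realType) (E : set R) (c K : R) :
  0 <= K -> E !=set0 -> (forall x, E x -> c <= K * x) -> c <= K * inf E.
Proof.
move=> K_ge0 [x0 Ex0] cE; have [K0|K_neq0] := eqVneq K 0.
  by have := cE x0 Ex0; rewrite K0 !mul0r.
have K_gt0 : 0 < K by rewrite lt_def K_neq0.
rewrite mulrC -ler_pdivrMr //; apply: lb_le_inf; first by exists x0.
by move=> x Ex; rewrite ler_pdivrMr // mulrC; exact: cE.
Qed.

Section MaxNorm.
Variable R : realType.

Definition frob_dot m n (X M : 'M[R]_(m, n)) := \sum_i \sum_j X i j * M i j.

Definition row_sqnorm m k (U : 'M[R]_(m, k)) i := \sum_j U i j ^+ 2.

Lemma frob_dotBl m n (X Y M : 'M[R]_(m, n)) : frob_dot (X - Y) M = frob_dot X M - frob_dot Y M.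
Proof.
rewrite /frob_dot -sumrB; apply: eq_bigr => i _; rewrite -sumrB.
by apply: eq_bigr => j _; rewrite !mxE mulrBl.
Qed.

Lemma norm_2inf_ge0 m k (U : 'M[R]_(m, k)) : 0 <= norm_2inf U.
Proof. exact: bigmax_ge_id. Qed.

Lemma row_sqnorm_le_norm_2inf m k (U : 'M[R]_(m, k)) i :
  row_sqnorm U i <= norm_2inf U ^+ 2.
Proof.
rewrite /row_sqnorm -(sqr_sqrtr (sumr_sqr_ge0 (U i))).
rewrite ler_pXn2r ?nnegrE ?sqrtr_ge0 ?norm_2inf_ge0 //.
exact: le_bigmax.
Qed.

Lemma norm_2inf_le_sqrt m k (U : 'M[R]_(m, k)) (b : R) :
  0 <= b -> (forall i, row_sqnorm U i <= b) -> norm_2inf U <= Num.sqrt b.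
Proof.
move=> b_ge0 Ub; apply: bigmax_le => [|i _]; first exact: sqrtr_ge0.
by rewrite ler_sqrt //; exact: Ub.
Qed.

Lemma sumr_col_sqnorm_le m k (U : 'M[R]_(m, k)) :
  \sum_l \sum_i U i l ^+ 2 <= m%:R * norm_2inf U ^+ 2.
Proof.
have -> : m%:R * norm_2inf U ^+ 2 = \sum_(i < m) norm_2inf U ^+ 2.
  by rewrite sumr_const card_ord mulr_natl.
rewrite exchange_big /=.
by apply: ler_sum => i _; exact: row_sqnorm_le_norm_2inf.
Qed.

Lemma normr_frob_dot_mul_tr_le m n k (X : 'M[R]_(m, n)) (U : 'M[R]_(m, k)) (V : 'M[R]_(n, k)) :
  `|frob_dot X (U *m V^T)| <=
    opnorm X * (Num.sqrt m%:R * norm_2inf U) * (Num.sqrt n%:R * norm_2inf V).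
Proof.
pose a l := Num.sqrt (\sum_i U i l ^+ 2); pose b l := Num.sqrt (\sum_j V j l ^+ 2).
have -> : frob_dot X (U *m V^T) = \sum_l bilin X (fun i => U i l) (fun j => V j l).
  rewrite /bilin exchange_big; apply: eq_bigr => i _; rewrite exchange_big.
  apply: eq_bigr => j _; rewrite !mxE mulr_sumr; apply: eq_bigr => l _.
  by rewrite mxE; ring.
have col_le (p : nat) (W : 'M[R]_(p, k)) :
    Num.sqrt (\sum_l Num.sqrt (\sum_i W i l ^+ 2) ^+ 2) <= Num.sqrt p%:R * norm_2inf W.
  under eq_bigr do rewrite sqr_sqrtr ?sumr_sqr_ge0 //.
  rewrite -[norm_2inf W]ger0_norm ?norm_2inf_ge0 // -sqrtr_sqr -sqrtrM ?ler0n //.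
  by rewrite ler_sqrt ?mulr_ge0 ?ler0n ?sqr_ge0 ?norm_2inf_ge0 ?sumr_col_sqnorm_le.
apply: le_trans (ler_norm_sum _ _ _) _.
apply: le_trans (ler_sum _ (fun l _ => normr_bilin_le X (fun i => U i l) (fun j => V j l))) _.
under eq_bigr do rewrite -mulrA.
rewrite -mulr_sumr -mulrA ler_wpM2l ?opnorm_ge0 //.
apply: le_trans (CauchySchwarz_sumr a b) _.
by rewrite ler_pM ?sqrtr_ge0 ?col_le.
Qed.

Lemma maxnorm_le_factor m n k (M : 'M[R]_(m, n)) (U : 'M[R]_(m, k)) (V : 'M[R]_(n, k)) :
  M = U *m V^T -> maxnorm M <= norm_2inf U * norm_2inf V.
Proof.
move=> MUV; apply: ge_inf; last by exists k, U, V.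
by exists 0 => _ [p [U' [V' [_ ->]]]]; rewrite mulr_ge0 ?norm_2inf_ge0.
Qed.

Lemma normr_frob_dot_le_maxnorm m n (X M : 'M[R]_(m, n)) :
  `|frob_dot X M| <= opnorm X * Num.sqrt (m * n)%:R * maxnorm M.
Proof.
apply: ler_mul_inf; first by rewrite mulr_ge0 ?opnorm_ge0 ?sqrtr_ge0.
  by exists (norm_2inf M * norm_2inf (1%:M : 'M[R]_n)), n, M, 1%:M; rewrite trmx1 mulmx1.
move=> _ [k [U [V [-> ->]]]]; apply: le_trans (normr_frob_dot_mul_tr_le X U V) _.
by rewrite natrM sqrtrM ?ler0n //; lra.
Qed.

End MaxNorm.

Lemma det_1D_tr_mul (R : comPzRingType) n (a b : 'rV[R]_n) :
  \det (1%:M + a^T *m b) = 1 + (b *m a^T) 0 0.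
Proof.
pose L := block_mx (1%:M : 'M[R]_1) 0 a^T (1%:M : 'M[R]_n).
pose U1 := block_mx (1%:M : 'M[R]_1) (- b) 0 (1%:M + a^T *m b).
pose U2 := block_mx (1%:M + b *m a^T : 'M[R]_1) (- b) 0 (1%:M : 'M[R]_n).
have LU : L *m U1 = U2 *m L.
  rewrite /L /U1 /U2 !mulmx_block !mulmx0 !mul0mx !mul1mx !mulmx1 !addr0 !add0r.
  by rewrite mulmxN mulNmx addrK (addrC 1%:M) addKr.
have := congr1 determinant LU.
rewrite !det_mulmx det_lblock !det_ublock !det1 !mul1r !mulr1 => ->.
by rewrite det_mx11 !mxE eqxx.
Qed.

Lemma det_scalar_rank1 (R : fieldType) n (w : 'rV[R]_n) (p q : R) : p != 0 ->
  \det (p%:M + q *: (w^T *m w)) = p ^+ n * (1 + q / p * \sum_l w 0 l ^+ 2).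
Proof.
move=> p_neq0.
have -> : p%:M + q *: (w^T *m w) = p *: (1%:M + ((q / p) *: w)^T *m w).
  by apply/matrixP => i j; rewrite !mxE !big_ord1 !mxE; case: (i == j) => /=; field.
rewrite detZ det_1D_tr_mul !mxE mulr_sumr; congr (_ * (1 + _)).
by apply: eq_bigr => l _; rewrite !mxE; ring.
Qed.

Lemma normr_det_le_fact (R : numDomainType) n (M : 'M[R]_n) :
  (forall i j, `|M i j| <= 1) -> `|\det M| <= n`!%:R.
Proof.
move=> M_le1; apply: le_trans (ler_norm_sum _ _ _) _.
rewrite -card_Sn -sumr_const; apply: ler_sum => s _.
rewrite normrM normrX normrN normr1 expr1n mul1r normr_prod.
by apply: prodr_ile1 => i _; rewrite normr_ge0 M_le1.
Qed.

Lemma bernoulli_ineq (R : realFieldType) (x : R) n : -1 <= x -> 1 + n%:R * x <= (1 + x) ^+ n.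
Proof.
move=> x_ge; elim: n => [|n IHn]; first by rewrite mul0r addr0 expr0.
have : (1 + x) * (1 + n%:R * x) <= (1 + x) * (1 + x) ^+ n by rewrite ler_wpM2l //; lra.
have := ler0n R n; rewrite exprS -natr1; nra.
Qed.

Lemma exprn_unbounded (R : realType) (x B : R) : 0 < x -> exists m, B < (1 + x) ^+ m.
Proof.
move=> x_gt0; pose m := Num.bound (`|B| / x).
have B_lt : `|B| / x < m%:R by apply: archi_boundP; rewrite divr_ge0 // ltW.
exists m; apply: le_lt_trans (ler_norm B) _.
apply: lt_le_trans (bernoulli_ineq m (_ : -1 <= x)); last lra.
by move: B_lt; rewrite ltr_pdivrMr //; lra.
Qed.

(* The coefficients of the update [H -> H (p I + q w^T w)] of [john_step], with
   [W = |w|^2 > 2k]; any choice giving a determinant factor above 1 would do. *)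
Section RankOneUpdate.
Variable R : realFieldType.
Variables (k : nat) (W : R).
Hypothesis k_ge1 : (1 <= k)%N.

Let p : R := 1 - (8 * k%:R)^-1.
Let q : R := (5 * W)^-1.
Let t : R := k%:R^-1.

Let t_range : 0 < t <= 1.
Proof. by rewrite invr_gt0 ltr0n k_ge1 invf_le1 ?ler1n ?ltr0n. Qed.
Let pE : p = 1 - t / 8. Proof. by rewrite /p invfM mulrC. Qed.

Lemma update_det_ge : 0 < W -> 21/20 <= p ^+ k * (1 + q / p * W).
Proof.
move=> W_gt0; have /andP[t_gt0 t_le1] := t_range.
have p_gt0 : 0 < p by rewrite pE; lra.
have -> : p ^+ k * (1 + q / p * W) = p ^+ k.-1 * (p + 1/5).
  by rewrite -{1}(prednK k_ge1) exprS /q; field; rewrite !gt_eqF.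
have k1t : (k.-1)%:R * t = 1 - t.
  have : k%:R * t = 1 by rewrite mulfV // pnatr_eq0 -lt0n.
  by rewrite -{1}(prednK k_ge1) -natr1 mulrDl mul1r; lra.
have t8 : -1 <= - (t / 8) by lra.
have := bernoulli_ineq k.-1 t8; rewrite -pE.
rewrite mulrN mulrA k1t => p_ge.
have : (1 - (1 - t) / 8) * (6/5 - t/8) <= p ^+ k.-1 * (6/5 - t/8) by rewrite ler_wpM2r; lra.
rewrite pE in p_ge *; nra.
Qed.

Lemma update_row_le (Z c : R) : 2 * k%:R <= W -> 0 <= Z <= 1 -> c ^+ 2 <= 1 ->
  p ^+ 2 * Z + 2 * p * q * c ^+ 2 + q ^+ 2 * c ^+ 2 * W <= 1.
Proof.
move=> W_ge /andP[Z_ge0 Z_le1] c_le1; have /andP[t_gt0 t_le1] := t_range.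
have W_gt0 : 0 < W by apply: lt_le_trans W_ge; rewrite mulr_gt0 ?ltr0n.
have Wt : W^-1 <= t / 2.
  by rewrite /t -invfM mulrC lef_pV2 // posrE mulr_gt0 ?ltr0n.
have -> : q = W^-1 / 5 by rewrite /q invfM mulrC.
have -> : (W^-1 / 5) ^+ 2 * c ^+ 2 * W = c ^+ 2 * W^-1 / 25 by field; rewrite gt_eqF.
set u := W^-1 in Wt *; rewrite pE.
have u_gt0 : 0 < u by rewrite invr_gt0.
set A := (1 - t / 8) ^+ 2; set B := 2 * (1 - t / 8) * (u / 5) + u / 25.
have -> : A * Z + 2 * (1 - t / 8) * (u / 5) * c ^+ 2 + c ^+ 2 * u / 25 = A * Z + B * c ^+ 2.
  by rewrite /B; ring.
have AZ : A * Z <= A by rewrite ler_piMr ?sqr_ge0.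
have Bc : B * c ^+ 2 <= B by rewrite ler_piMr ?sqr_ge0 // /B; nra.
have : A + B <= 1 by rewrite /A /B; nra.
lra.
Qed.

End RankOneUpdate.

Lemma dot_rows_mul_invmx (R : fieldType) k S A (X : 'M[R]_(S, k)) (Y : 'M[R]_(A, k))
    (H : 'M[R]_k) i j : H \in unitmx ->
  \sum_l (Y *m H) j l * (X *m (invmx H)^T) i l = (X *m Y^T) i j.
Proof.
move=> Hu; have YX : (Y *m H) *m (X *m (invmx H)^T)^T = Y *m X^T.
  by rewrite trmx_mul trmxK (mulmxA (Y *m H)) -(mulmxA Y) mulmxV // mulmx1.
have := congr1 (fun M : 'M_(A, S) => M j i) YX; rewrite -[Y in RHS]trmxK -trmx_mul !mxE => <-.
by apply: eq_bigr => l _; rewrite !mxE.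
Qed.

Section JohnPosition.
Variable R : realType.
Variables (k S A : nat) (X : 'M[R]_(S, k)) (Y : 'M[R]_(A, k)).
Hypothesis XY_le1 : forall i j, `|(X *m Y^T) i j| <= 1.

Definition rows_le1 (H : 'M[R]_k) := forall j, row_sqnorm (Y *m H) j <= 1.

Lemma john_step (H : 'M[R]_k) i : (1 <= k)%N -> H \in unitmx -> rows_le1 H ->
  2 * k%:R < row_sqnorm (X *m (invmx H)^T) i ->
  exists2 H', H' \in unitmx /\ rows_le1 H' & 21/20 * `|\det H| <= `|\det H'|.
Proof.
move=> k_ge1 Hu H_le1; set T := X *m (invmx H)^T; set W := row_sqnorm T i => W_gt.
have W_gt0 : 0 < W by apply: le_lt_trans W_gt; rewrite mulr_ge0 ?ler0n.
pose w := row i T; pose p : R := 1 - (8 * k%:R)^-1; pose q : R := (5 * W)^-1.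
have p_gt0 : 0 < p.
  have : 1 <= k%:R :> R by rewrite ler1n.
  by rewrite subr_gt0 invf_lt1 ?mulr_gt0 ?ltr0n //; lra.
have wW : \sum_l w 0 l ^+ 2 = W by apply: eq_bigr => l _; rewrite mxE.
pose N := p%:M + q *: (w^T *m w).
have detN : 21/20 <= \det N.
  rewrite det_scalar_rank1 ?gt_eqF //.
  by rewrite wW; exact: update_det_ge.
exists (H *m N); first split.
- by rewrite unitmxE det_mulmx unitrM -!unitmxE Hu unitmxE unitfE; apply/eqP; lra.
- move=> j; set z := row j (Y *m H).
  have zNE l : (Y *m (H *m N)) j l =
      p * z 0 l + q * (\sum_m z 0 m * w 0 m) * w 0 l.
    rewrite mulmxA /N mulmxDr mul_mx_scalar -scalemxAr mulmxA !mxE big_ord1 !mxE.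
    by rewrite -mulrA; congr (_ + q * (_ * _)); apply: eq_bigr => m _; rewrite !mxE.
  rewrite /row_sqnorm (eq_bigr _ (fun l _ => congr1 (fun x => x ^+ 2) (zNE l))).
  rewrite sumr_sqr_rank1_update wW; apply: (update_row_le k_ge1); first exact: ltW.
    have -> : \sum_l z 0 l ^+ 2 = row_sqnorm (Y *m H) j.
      by apply: eq_bigr => l _; rewrite mxE.
    by rewrite H_le1 andbT sumr_sqr_ge0.
  have -> : \sum_m z 0 m * w 0 m = (X *m Y^T) i j.
    by rewrite -(dot_rows_mul_invmx _ _ i j Hu); apply: eq_bigr => m _; rewrite !mxE.
  by rewrite -real_normK ?num_real // expr_le1 ?XY_le1.
- have detN_ge0 : 0 <= \det N by lra.
  by rewrite det_mulmx normrM (ger0_norm detN_ge0) [leRHS]mulrC ler_wpM2r.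
Qed.

Lemma rows_le1_scalar : exists2 c : R, 0 < c & rows_le1 c%:M.
Proof.
pose s := \sum_j row_sqnorm Y j.
have s_ge0 : 0 <= s by apply: sumr_ge0 => j _; exact: sumr_sqr_ge0.
exists (1 + s)^-1; first by rewrite invr_gt0; lra.
move=> j; rewrite mul_mx_scalar /row_sqnorm.
under eq_bigr do rewrite mxE exprMn.
rewrite -mulr_sumr -/(row_sqnorm Y j) exprVn ler_pdivrMl ?mulr1 ?exprn_gt0 //; last lra.
have : row_sqnorm Y j <= s.
  by rewrite /s (bigD1 j) //= lerDl sumr_ge0 // => l _; exact: sumr_sqr_ge0.
have := sumr_sqr_ge0 (Y j); rewrite -/(row_sqnorm Y j); nra.
Qed.

Lemma rows_le1_det_bounded : row_full Y ->
  exists B, forall H, rows_le1 H -> `|\det H| <= B.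
Proof.
move=> Yfull; set Y0 := rowsub (fullrankfun Yfull) Y.
have D_gt0 : 0 < `|\det Y0| by rewrite normr_gt0 -unitfE -unitmxE fullrowsub_unit.
exists (k`!%:R / `|\det Y0|) => H H_le1; rewrite ler_pdivlMr // mulrC -normrM -det_mulmx.
apply: normr_det_le_fact => l m; rewrite /Y0 mul_rowsub_mx mxE.
exact: (normr_le1_sumr_sqr m (H_le1 _)).
Qed.

Lemma john_position : row_full Y -> exists H, [/\ H \in unitmx, rows_le1 H &
  forall i, row_sqnorm (X *m (invmx H)^T) i <= 2 * k%:R].
Proof.
move=> Yfull; have [k0|k_ge1] := posnP k.
  exists 1%:M; split => [|j|i]; rewrite ?unitmx1 // /row_sqnorm.
    by rewrite big1 ?ler01 // => -[l lt_lk]; exfalso; move: lt_lk; rewrite k0.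
  by rewrite big1 ?mulr_ge0 ?ler0n // => -[l lt_lk]; exfalso; move: lt_lk; rewrite k0.
apply: contrapT => no_H.
have step H : H \in unitmx -> rows_le1 H ->
    exists2 H', H' \in unitmx /\ rows_le1 H' & 21/20 * `|\det H| <= `|\det H'|.
  move=> Hu H_le1; apply: contrapT => no_step; apply: no_H; exists H; split => // i.
  by rewrite leNgt; apply/negP => /(john_step k_ge1 Hu H_le1).
have [c c_gt0 c_le1] := rows_le1_scalar.
have grow m : exists2 H, H \in unitmx /\ rows_le1 H & (21/20) ^+ m * c ^+ k <= `|\det H|.
  elim: m => [|m [H [Hu H_le1] detH]].
    exists c%:M; first by rewrite unitmxE det_scalar unitfE expf_neq0 ?gt_eqF.
    by rewrite expr0 mul1r det_scalar ger0_norm // exprn_ge0 // ltW.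
  have [H' H'_ok detH'] := step H Hu H_le1; exists H' => //.
  by rewrite exprS -mulrA; apply: le_trans detH'; rewrite ler_wpM2l ?divr_ge0.
have [B detB] := rows_le1_det_bounded Yfull.
have [m ltBm] : exists m, B / c ^+ k < (21/20) ^+ m.
  by rewrite (_ : 21/20 = 1 + 1/20); [apply: exprn_unbounded|]; lra.
have [H [_ H_le1] detH] := grow m.
move: ltBm; rewrite ltr_pdivrMr ?exprn_gt0 //; have := detB H H_le1.
lra.
Qed.

End JohnPosition.

Section LowRank.
Variable R : realType.

Lemma maxnorm_le_sqrt_rank m n (M : 'M[R]_(m, n)) :
  (forall i j, `|M i j| <= 1) -> maxnorm M <= Num.sqrt (2 * (\rank M)%:R).
Proof.
move=> M_le1; set X := col_base M; set Y := (row_base M)^T.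
have MXY : M = X *m Y^T by rewrite trmxK mulmx_base.
have Yfull : row_full Y by rewrite /row_full mxrank_tr; exact: row_base_free.
have XY_le1 i j : `|(X *m Y^T) i j| <= 1 by rewrite -MXY.
have [H [Hu H_le1 XH_le]] := john_position XY_le1 Yfull.
have MH : M = (X *m (invmx H)^T) *m (Y *m H)^T.
  by rewrite {1}MXY trmx_mul -mulmxA (mulmxA _ H^T) -trmx_mul mulmxV ?trmx1 ?mul1mx.
apply: le_trans (maxnorm_le_factor MH) _.
have U_le := norm_2inf_le_sqrt (mulr_ge0 (ler0n R 2) (ler0n R _)) XH_le.
have V_le := norm_2inf_le_sqrt ler01 H_le1.
apply: le_trans (ler_pM (norm_2inf_ge0 _) (norm_2inf_ge0 _) U_le V_le) _.
by rewrite sqrtr1 mulr1.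
Qed.

End LowRank.

Section OffPolicyEvaluation.
Variables (R : realType) (S A : nat).
Implicit Types (g p q M N : 'M[R]_(S, A)) (mu : 'I_S -> R) (pi : 'I_S -> 'I_A -> R).

Lemma occ_is_distr mu pi : (forall s, 0 <= mu s) -> \sum_s mu s = 1 ->
  (forall s a, 0 <= pi s a) -> (forall s, \sum_a pi s a = 1) -> is_distr (occ mu pi).
Proof.
move=> mu_ge0 mu1 pi_ge0 pi1; split=> [s a|]; first by rewrite mxE mulr_ge0.
rewrite -mu1; apply: eq_bigr => s _.
by under eq_bigr do rewrite mxE; rewrite -mulr_sumr pi1 mulr1.
Qed.

Lemma value_frob_dot mu pi M : value mu pi M = frob_dot (occ mu pi) M.
Proof. by apply: eq_bigr => s _; apply: eq_bigr => a _; rewrite mxE. Qed.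

Lemma frob_dot_eq_on_supp p g M N : (forall i j, p i j = 0 -> g i j = 0) ->
  hadamard (supp_ind p) M = hadamard (supp_ind p) N -> frob_dot g M = frob_dot g N.
Proof.
move=> g_supp MN; apply: eq_bigr => i _; apply: eq_bigr => j _.
have [p0|p_neq0] := eqVneq (p i j) 0; first by rewrite g_supp // !mul0r.
by have := congr1 (fun M : 'M_(S, A) => M i j) MN; rewrite /= !mxE p_neq0 !mul1r => ->.
Qed.

Lemma normr_frob_dotB_le g q M N : frob_dot g M = frob_dot g N ->
  `|frob_dot q M - frob_dot q N| <=
    opnorm (g - q) * Num.sqrt (S * A)%:R * (maxnorm M + maxnorm N).
Proof.
move=> gMN; have -> : frob_dot q M - frob_dot q N = frob_dot (g - q) N - frob_dot (g - q) M.
  by rewrite !frob_dotBl gMN; ring.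
rewrite mulrDr [leRHS]addrC; apply: le_trans (ler_normB _ _) _.
by rewrite lerD ?normr_frob_dot_le_maxnorm.
Qed.

End OffPolicyEvaluation.

Unset Implicit Arguments.
Set Strict Implicit.

Theorem corollary3 (R : realType) (S A d : nat)
  (mu : 'I_S -> R) (piT piB : 'I_S -> 'I_A -> R) (r : 'M[R]_(S, A))
  (Qhat : 'M[R]_(S, A)) :
  (forall s, 0 <= mu s) -> \sum_s mu s = 1 ->
  (forall s a, 0 <= piT s a) -> (forall s, \sum_a piT s a = 1) ->
  (forall s a, 0 <= piB s a) -> (forall s, \sum_a piB s a = 1) ->
  (forall s a, 0 <= r s a <= 1) ->
  (\rank r <= d./2)%N ->
  (* Qhat is feasible *)
  hadamard (supp_ind (occ mu piB)) Qhat = hadamard (supp_ind (occ mu piB)) r ->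
  supnorm Qhat <= 1 ->
  (* Qhat minimizes the max norm among feasible matrices *)
  (forall M : 'M[R]_(S, A),
     hadamard (supp_ind (occ mu piB)) M = hadamard (supp_ind (occ mu piB)) r ->
     supnorm M <= 1 -> maxnorm Qhat <= maxnorm M) ->
  `| value mu piT Qhat - value mu piT r | <=
    2 * Num.sqrt ((d * S * A)%:R) * Dis (occ mu piB) (occ mu piT).
Proof.
move=> mu_ge0 mu1 _ _ piB_ge0 piB1 r01 rk_r feas _ opt.
have r_le1 s a : `|r s a| <= 1 by have /andP[r_ge0 r_le1] := r01 s a; rewrite ger0_norm.
have r_max : maxnorm r <= Num.sqrt d%:R.
  by apply: le_trans (maxnorm_le_sqrt_rank r_le1) _; rewrite ler_sqrt // -natrM ler_nat; lia.
have Qhat_max : maxnorm Qhat <= maxnorm r.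
  by apply: opt => //; apply: bigmax_le => // s _; apply: bigmax_le => // a _; exact: r_le1.
set p := occ mu piB; set q := occ mu piT; rewrite !value_frob_dot.
apply: ler_mul_inf; first by rewrite mulr_ge0 ?sqrtr_ge0.
  by exists (opnorm (p - q)), p; split; first exact: occ_is_distr.
move=> _ [g [_ [g_supp ->]]].
apply: le_trans (normr_frob_dotB_le q (frob_dot_eq_on_supp g_supp feas)) _.
rewrite -mulnA (natrM _ d) sqrtrM ?ler0n //.
have -> : 2 * (Num.sqrt d%:R * Num.sqrt (S * A)%:R) * opnorm (g - q) =
  opnorm (g - q) * Num.sqrt (S * A)%:R * (2 * Num.sqrt d%:R) by ring.
by rewrite ler_wpM2l ?mulr_ge0 ?opnorm_ge0 ?sqrtr_ge0 //; lra.
Qed.
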